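(* Let $n=2^s$, $q=2^r$ ($s,r$ positive integers). For $\beta\in\mathbb{F}_q$ let \[ \delta(n-1,q;\beta)=|\{(\alpha_1,\dots,\alpha_{n-1})\in(\mathbb{F}_q^* )^{n-1}:\alpha_1+\cdots+\alpha_{n-1}+\alpha_1^{-1}\cdots\alpha_{n-1}^{-1}=\beta\}|. \] Then $\delta(n-1,q;0)=q^{-1}\{(q-1)^{n-1}+1\}$, and for $\beta\in\mathbb{F}_q^*$, \[ \delta(n-1,q;\beta)=K_{n-2}(\lambda;\beta^{-1})+q^{-1}\{(q-1)^{n-1}+1\}. \]
   Context: $\mathbb{F}_q$ is the field with $q$ elements, $tr$ the absolute trace to $\mathbb{F}_2$, $\lambda(x)=(-1)^{tr(x)}$. For $m\ge1$ and $a\in\mathbb{F}_q^*$, $K_m(\lambda;a)=\sum_{\alpha_1,\dots,\alpha_m\in\mathbb{F}_q^*}\lambda(\alpha_1+\cdots+\alpha_m+a\alpha_1^{-1}\cdots\alpha_m^{-1})$; by convention $K_0(\lambda;a)=\lambda(a)$. *)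

From HB Require Import structures.
From mathcomp Require Import all_boot all_order all_algebra all_field.
Set Implicit Arguments. Unset Strict Implicit. Unset Printing Implicit Defensive.
Import Order.TTheory GRing.Theory Num.Theory.
Local Open Scope ring_scope.

Definition abs_trace (F : finFieldType) (x : F) : F :=
  \sum_(i < logn 2 #|F|) x ^+ (2 ^ i).

Definition lam (F : finFieldType) (x : F) : int :=
  if abs_trace x == 0 then 1 else -1.

Definition kloosterman (F : finFieldType) (m : nat) (a : F) : int :=
  if m is 0 then lam a else
  \sum_(f : {ffun 'I_m -> F} | [forall i, f i != 0])
     lam (\sum_(i < m) f i + a * \prod_(i < m) (f i)^-1).

Definition delta (F : finFieldType) (k : nat) (beta : F) : nat :=
  #|[set f : {ffun 'I_k -> F} | [forall i, f i != 0] &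
       \sum_(i < k) f i + \prod_(i < k) (f i)^-1 == beta]|.

From HB Require Import structures.
From mathcomp Require Import all_boot all_order all_algebra all_field.
From mathcomp Require Import zify.
Set Implicit Arguments. Unset Strict Implicit. Unset Printing Implicit Defensive.
Import Order.TTheory GRing.Theory Num.Theory.
Local Open Scope ring_scope.

(* Orthogonality of lam gives
     q * delta(k; b) = \sum_t \sum_f lam (t * (\sum f + \prod f^-1 + b)),
   f ranging over (F^* )^k.  The term t = 0 contributes (q - 1)^k.  For t != 0 and
   k + 1 = 2^s, the substitution f_i = d_i^(2^s) / t writes both t * \sum f and
   t * \prod f^-1 as 2^s-th powers, which lam does not see; the sum over t then
   separates and, k being odd, \sum_d lam (\sum d) = (-1)^k = -1.  What is left is
   q times the sum of lam (\sum d) over the d with \prod d^-1 = b: it is empty for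
   b = 0 and, solving for the last coordinate, equals K_(k-1)(lam; b^-1) otherwise. *)

Lemma sum_ffun_prod (T : finType) (R : comPzSemiRingType) (P : pred T) (G : T -> R) k :
  \sum_(f : {ffun 'I_k -> T} | [forall i, P (f i)]) \prod_i G (f i)
    = (\sum_(a | P a) G a) ^+ k.
Proof.
rewrite -[in RHS](card_ord k) -prodr_const bigA_distr_big.
by apply: eq_bigl => f; apply/forallP/ffun_onP.
Qed.

Section FfunRcons.
Variables (T : Type) (m : nat).

Definition ffun_rcons (g : {ffun 'I_m -> T}) (x : T) : {ffun 'I_m.+1 -> T} :=
  [ffun i => if unlift ord_max i is Some j then g j else x].

Lemma ffun_rcons_lift g x j : ffun_rcons g x (lift ord_max j) = g j.
Proof. by rewrite ffunE liftK. Qed.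

Lemma ffun_rcons_max g x : ffun_rcons g x ord_max = x.
Proof. by rewrite ffunE unlift_none. Qed.

Lemma big_ffun_rcons (R : Type) (idx : R) (op : Monoid.law idx) (G : T -> R) g x :
  \big[op/idx]_(i < m.+1) G (ffun_rcons g x i)
    = op (\big[op/idx]_(j < m) G (g j)) (G x).
Proof.
rewrite big_ord_recr ffun_rcons_max; congr (op _ _); apply: eq_bigr => j _.
have -> : widen_ord (leqnSn m) j = lift ord_max j by apply: val_inj; rewrite [RHS]lift_max.
by rewrite ffunE liftK.
Qed.

Lemma forall_ffun_rcons (P : pred T) g x :
  [forall i, P (ffun_rcons g x i)] = [forall j, P (g j)] && P x.
Proof.
apply/forallP/andP => [H | [/forallP H Px] i].
  split; last by have := H ord_max; rewrite ffun_rcons_max.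
  by apply/forallP => j; have := H (lift ord_max j); rewrite ffun_rcons_lift.
by case: (unliftP ord_max i) => [j ->|->]; rewrite ?ffun_rcons_lift ?ffun_rcons_max.
Qed.

End FfunRcons.

Lemma sum_ffun_rcons (T : finType) (R : nmodType) m (G : {ffun 'I_m.+1 -> T} -> R) :
  \sum_f G f = \sum_(g : {ffun 'I_m -> T}) \sum_(x : T) G (ffun_rcons g x).
Proof.
rewrite pair_big (reindex (fun p => ffun_rcons p.1 p.2)) //=.
apply: onW_bij.
exists (fun f : {ffun 'I_m.+1 -> T} => ([ffun j => f (lift ord_max j)], f ord_max)).
  case=> g x /=; rewrite ffun_rcons_max; congr pair.
  by apply/ffunP => j; rewrite ffunE; apply: ffun_rcons_lift.
move=> f; apply/ffunP => i.
by case: (unliftP ord_max i) => [j ->|->] /=; rewrite ?ffun_rcons_lift ?ffun_rcons_max ?ffunE.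
Qed.

Section CharTwoFrobenius.
Variables (F : idomainType) (charF : 2 \in [pchar F]).

Lemma pchar_nat_pow2 n : [pchar F].-nat (2 ^ n)%N.
Proof. by rewrite pnatX pnatE // charF. Qed.

Lemma exprD_pow2 n (x y : F) : (x + y) ^+ (2 ^ n)%N = x ^+ (2 ^ n)%N + y ^+ (2 ^ n)%N.
Proof. by rewrite exprDn_pchar ?pchar_nat_pow2. Qed.

Lemma expr_pow2_sum n (I : finType) (P : pred I) (f : I -> F) :
  (\sum_(i | P i) f i) ^+ (2 ^ n)%N = \sum_(i | P i) f i ^+ (2 ^ n)%N.
Proof.
apply: (big_morph (fun x : F => x ^+ (2 ^ n)%N)); first exact: exprD_pow2.
by rewrite expr0n expn_eq0.
Qed.

Lemma expr_pow2_inj n : injective (fun x : F => x ^+ (2 ^ n)%N).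
Proof.
move=> x y /= exy; apply/eqP; rewrite -subr_eq0.
have : (x - y) ^+ (2 ^ n) == 0.
  by rewrite exprDn_pchar ?exprNn_pchar ?pchar_nat_pow2 // exy subrr.
by rewrite expf_eq0 => /andP[].
Qed.

End CharTwoFrobenius.

Section EvenCharacteristic.
Variables (F : finFieldType) (r : nat).
Hypotheses (r_gt0 : (0 < r)%N) (cardF : #|F| = (2 ^ r)%N).

Lemma finF_pchar2 : 2 \in [pchar F].
Proof. exact: card_finPcharP cardF _. Qed.

Lemma abs_traceE (x : F) : abs_trace x = \sum_(i < r) x ^+ (2 ^ i).
Proof. by rewrite /abs_trace cardF pfactorK. Qed.

Lemma abs_trace0 : abs_trace (0 : F) = 0.
Proof. by rewrite abs_traceE big1 // => i _; rewrite expr0n expn_eq0. Qed.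

Lemma abs_traceD (x y : F) : abs_trace (x + y) = abs_trace x + abs_trace y.
Proof.
rewrite !abs_traceE -big_split; apply: eq_bigr => i _.
exact: exprD_pow2 finF_pchar2 _ _ _.
Qed.

Lemma abs_trace_sqr (x : F) : abs_trace (x ^+ 2) = abs_trace x.
Proof.
have [r' def_r] : exists r', r = r'.+1 by exists r.-1; rewrite prednK.
rewrite !abs_traceE def_r; under eq_bigr do rewrite -exprM -expnS.
rewrite big_ord_recr big_ord_recl /= -def_r -cardF expf_card expr1 addrC.
by congr (_ + _); apply: eq_bigr.
Qed.

(* Frobenius commutes with the trace and fixes it, so the trace is idempotent. *)
Lemma abs_trace_eq01 (x : F) : abs_trace x = 0 \/ abs_trace x = 1.
Proof.
have idem : abs_trace x * abs_trace x = abs_trace x.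
  rewrite -expr2 -[RHS]abs_trace_sqr !abs_traceE.
  rewrite (expr_pow2_sum finF_pchar2 1); apply: eq_bigr => i _.
  by rewrite -!exprM mulnC.
have /eqP := idem; rewrite -subr_eq0 -[X in _ - X]mulr1 -mulrBr mulf_eq0 subr_eq0.
by case/orP => /eqP ->; [left | right].
Qed.

(* Otherwise every element of F is a root of the nonzero polynomial
   \sum_(i < r) 'X^(2^i), whose degree 2^(r-1) is smaller than #|F|. *)
Lemma abs_trace_neq0 : exists a : F, abs_trace a != 0.
Proof.
apply/existsP; apply: contraT; rewrite negb_exists => /forallP /= trace0.
pose P : {poly F} := \sum_(i < r) 'X^(2 ^ i).
have rootsP : all (root P) (enum F).
  apply/allP => x _; rewrite /root horner_sum.
  under eq_bigr do rewrite hornerXn.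
  by rewrite -abs_traceE (negbNE (trace0 x)).
have last_lt_r : (r.-1 < r)%N by rewrite prednK.
have P_neq0 : P != 0.
  apply/eqP => /(congr1 (fun p : {poly F} => p`_(2 ^ r.-1))); rewrite coef0 coef_sum.
  rewrite (bigD1 (Ordinal last_lt_r)) //= coefXn eqxx big1 ?addr0 => [/eqP|i ne_i].
    by rewrite oner_eq0.
  rewrite coefXn eqn_exp2l //; case: eqP => // eq_i.
  by case/eqP: ne_i; apply: val_inj.
have sizeP : (size P <= (2 ^ r.-1).+1)%N.
  apply: leq_trans (size_sum _ _ _) _; apply/bigmax_leqP => i _.
  by rewrite size_polyXn ltnS leq_exp2l // -ltnS prednK.
have := max_poly_roots P_neq0 rootsP (enum_uniq _).
rewrite -cardE cardF => /leq_trans/(_ sizeP).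
have [r' def_r] : exists r', r = r'.+1 by exists r.-1; rewrite prednK.
by rewrite def_r /= expnS; have := expn_gt0 2 r'; lia.
Qed.

Lemma lam0 : lam (0 : F) = 1.
Proof. by rewrite /lam abs_trace0 eqxx. Qed.

Lemma lamD (x y : F) : lam (x + y) = lam x * lam y.
Proof.
rewrite /lam abs_traceD.
case: (abs_trace_eq01 x) => ->; case: (abs_trace_eq01 y) => ->;
  rewrite ?addr0 ?add0r ?eqxx ?oner_eq0 ?mulr1 ?mulN1r ?opprK //.
by rewrite addrr_pchar2 ?finF_pchar2 ?eqxx.
Qed.

Lemma lam_sum (I : finType) (P : pred I) (f : I -> F) :
  lam (\sum_(i | P i) f i) = \prod_(i | P i) lam (f i).
Proof. by apply: (big_morph (@lam F)); [exact: lamD | exact: lam0]. Qed.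

Lemma lam_expr_pow2 n (x : F) : lam (x ^+ (2 ^ n)%N) = lam x.
Proof.
elim: n => [|n IHn]; first by rewrite expr1.
by rewrite expnSr exprM /lam abs_trace_sqr.
Qed.

(* Translating by some a with lam a = -1 negates the sum. *)
Lemma sum_lam : \sum_(x : F) lam x = 0.
Proof.
have [a tra_neq0] := abs_trace_neq0.
have lam_a : lam a = -1 by rewrite /lam (negbTE tra_neq0).
have : \sum_(x : F) lam x = - \sum_(x : F) lam x.
  rewrite [LHS](reindex_inj (addIr a)) -sumrN /=.
  by apply: eq_bigr => x _; rewrite lamD lam_a mulrN1.
lia.
Qed.

Lemma sum_lam_mulr (z : F) :
  \sum_(t : F) lam (t * z) = if z == 0 then #|F|%:R else 0.
Proof.
have [->|z_neq0] := eqVneq z 0.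
  by under eq_bigr do rewrite mulr0 lam0; rewrite sumr_const.
rewrite (reindex_inj (mulIf (invr_neq0 z_neq0))) -[RHS]sum_lam /=.
by apply: eq_bigr => t _; rewrite mulfVK.
Qed.

Lemma sum_lam_mulr_neq0 (z : F) :
  \sum_(t | t != 0) lam (t * z) = (if z == 0 then #|F|%:R else 0) - 1.
Proof. by rewrite -sum_lam_mulr [in RHS](bigD1 0) //= mul0r lam0 addrC addrK. Qed.

Lemma sum_lam_neq0 : \sum_(x : F | x != 0) lam x = -1.
Proof.
have := sum_lam_mulr_neq0 1; rewrite oner_eq0 add0r => <-.
by apply: eq_bigr => x _; rewrite mulr1.
Qed.

Lemma delta_orthogonality k (b : F) :
  (#|F|%:R : int) * (delta k b)%:R =
  \sum_(t : F) \sum_(f : {ffun 'I_k -> F} | [forall i, f i != 0])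
     lam (t * (\sum_i f i + \prod_i (f i)^-1 + b)).
Proof.
rewrite exchange_big /= /delta -sum1_card natr_sum mulr_sumr.
rewrite big_mkcond [RHS]big_mkcond /=.
apply: eq_bigr => f _; rewrite inE sum_lam_mulr addr_eq0 oppr_pchar2 ?finF_pchar2 //.
by case: [forall _, _]; case: (_ == b); rewrite ?mulr1.
Qed.

(* Substituting f i = d i ^+ 2^s / t turns t * \sum_i f i into (\sum_i d i)^(2^s)
   and, as t ^+ k.+1 = t ^+ 2^s, t * \prod_i (f i)^-1 into (t * \prod_i (d i)^-1)^(2^s);
   lam does not see the Frobenius power. *)
Lemma sum_lam_separate s k (t b : F) : k.+1 = (2 ^ s)%N -> t != 0 ->
  \sum_(f : {ffun 'I_k -> F} | [forall i, f i != 0])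
     lam (t * (\sum_i f i + \prod_i (f i)^-1 + b))
  = \sum_(f : {ffun 'I_k -> F} | [forall i, f i != 0])
     lam (\sum_i f i) * lam (t * (\prod_i (f i)^-1 + b)).
Proof.
move=> def_k t_neq0.
pose h (d : {ffun 'I_k -> F}) := [ffun i => d i ^+ (2 ^ s) / t].
have h_inj : injective h.
  move=> d1 d2 /ffunP eq_h; apply/ffunP => i; have := eq_h i; rewrite !ffunE.
  by move/(mulIf (invr_neq0 t_neq0)); exact: (expr_pow2_inj finF_pchar2).
rewrite (reindex_inj h_inj) /=; apply: eq_big => [d | d _].
  apply: eq_forallb => i.
  by rewrite ffunE mulf_eq0 invr_eq0 (negbTE t_neq0) orbF expf_eq0 expn_gt0.
have scaled_sum : t * \sum_i h d i = (\sum_i d i) ^+ (2 ^ s).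
  rewrite expr_pow2_sum ?finF_pchar2 // mulr_sumr.
  by apply: eq_bigr => i _; rewrite ffunE mulrC divfK.
have scaled_prod : t * \prod_i (h d i)^-1 = (t * \prod_i (d i)^-1) ^+ (2 ^ s).
  under eq_bigr do rewrite ffunE invf_div -exprVn.
  by rewrite big_split prodr_const card_ord prodrXl mulrA -exprS def_k exprMn.
by rewrite !mulrDr !lamD scaled_sum scaled_prod !lam_expr_pow2 mulrA.
Qed.

Definition fiber_sum k (b : F) : int :=
  \sum_(f : {ffun 'I_k -> F} | [forall i, f i != 0] && (\prod_i (f i)^-1 == b))
     lam (\sum_i f i).

Lemma delta_fiber_sum s k (b : F) : (0 < s)%N -> k.+1 = (2 ^ s)%N ->
  (#|F|%:R : int) * (delta k b)%:R = (#|F|%:R - 1) ^+ k + 1 + #|F|%:R * fiber_sum k b.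
Proof.
move=> s_gt0 def_k.
have k_odd : odd k.
  have : ~~ odd k.+1 by rewrite def_k oddX orbF eqn0Ngt s_gt0.
  by rewrite /= negbK.
have term0 : \sum_(f : {ffun 'I_k -> F} | [forall i, f i != 0])
    lam (0 * (\sum_i f i + \prod_i (f i)^-1 + b)) = (#|F|%:R - 1) ^+ k.
  transitivity (\sum_(f : {ffun 'I_k -> F} | [forall i, f i != 0]) \prod_(i < k) lam (0 : F)).
    by apply: eq_bigr => f _; rewrite mul0r lam0 big1_eq.
  rewrite (sum_ffun_prod (fun a : F => a != 0) (fun=> lam 0)).
  have := sum_lam_mulr_neq0 0; rewrite eqxx => <-.
  by congr (_ ^+ _); apply: eq_bigr => t _; rewrite mulr0.
have sum_lam_ffun : \sum_(f : {ffun 'I_k -> F} | [forall i, f i != 0]) lam (\sum_i f i) = -1.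
  under eq_bigr do rewrite lam_sum.
  by rewrite (sum_ffun_prod (fun a : F => a != 0)) sum_lam_neq0 -signr_odd k_odd expr1.
have fiber_term : \sum_(f : {ffun 'I_k -> F} | [forall i, f i != 0])
    lam (\sum_i f i) * (if \prod_i (f i)^-1 + b == 0 then #|F|%:R else 0)
    = #|F|%:R * fiber_sum k b.
  rewrite /fiber_sum big_mkcondr mulr_sumr; apply: eq_bigr => f _.
  by rewrite addr_eq0 oppr_pchar2 ?finF_pchar2 //; case: ifP; rewrite ?mulr0 // mulrC.
rewrite delta_orthogonality (bigD1 0) //= term0.
under eq_bigr => t t_neq0 do rewrite (sum_lam_separate b def_k t_neq0).
rewrite exchange_big /=.
under eq_bigr do rewrite -mulr_sumr sum_lam_mulr_neq0 mulrBr mulr1.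
by rewrite sumrB sum_lam_ffun fiber_term opprK addrA addrAC.
Qed.

Lemma fiber_sum0 k : fiber_sum k 0 = 0.
Proof.
rewrite /fiber_sum big_pred0 // => f; apply/negbTE/negP => /andP[/forallP f_neq0].
by apply/negP/prodf_neq0 => i _; rewrite invr_eq0 f_neq0.
Qed.

Lemma kloostermanE m (a : F) : kloosterman m a =
  \sum_(g : {ffun 'I_m -> F} | [forall i, g i != 0]) lam (\sum_i g i + a * \prod_i (g i)^-1).
Proof.
case: m => [|m] //=.
under eq_bigr do rewrite !big_ord0 add0r mulr1.
rewrite (eq_bigl xpredT) => [|g]; last by apply/forallP => -[].
by rewrite sumr_const card_ffun card_ord expn0.
Qed.

(* The last coordinate of a point of the fiber is determined by the others. *)
Lemma fiber_sum_kloosterman m (b : F) : b != 0 -> fiber_sum m.+1 b = kloosterman m b^-1.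
Proof.
move=> b_neq0; rewrite kloostermanE /fiber_sum big_mkcond sum_ffun_rcons [RHS]big_mkcond /=.
apply: eq_bigr => g _.
under eq_bigr do rewrite (forall_ffun_rcons (fun a : F => a != 0))
  (big_ffun_rcons _ (fun a : F => a^-1)) (big_ffun_rcons _ (fun a : F => a)) -andbA.
case: forallP => [/= g_neq0 | _]; last by rewrite big1.
set P := \prod_j (g j)^-1.
have P_neq0 : P != 0 by apply/prodf_neq0 => j _; rewrite invr_eq0 g_neq0.
rewrite -big_mkcond (big_pred1 (b^-1 * P)) // => x /=.
apply/andP/eqP => [[x_neq0 /eqP <-] | ->].
  by rewrite invfM invrK mulrAC mulVf // mul1r.
by rewrite mulf_neq0 ?invr_neq0 // invfM invrK mulrCA divff // mulr1.
Qed.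

End EvenCharacteristic.

Lemma scaled_count_rat (q d k : nat) (T : int) : (0 < q)%N ->
  (q%:R : int) * d%:R = (q%:R - 1) ^+ k + 1 + q%:R * T ->
  (d%:R : rat) = T%:~R + ((q.-1 ^ k).+1)%:R / q%:R.
Proof.
case: q => // q _ /(congr1 (fun z : int => z%:~R : rat)).
rewrite !rmorphD !rmorphM rmorphXn rmorphB /= !rmorph_nat rmorph1 => eq_d.
have q_neq0 : (q.+1%:R : rat) != 0 by rewrite pnatr_eq0.
apply: (mulfI q_neq0); rewrite eq_d mulrDr mulrCA divff // mulr1.
by rewrite -natr1 addrK -natr1 natrX addrC.
Qed.

Theorem proposition11 (s r : nat) (F : finFieldType) :
  (0 < s)%N -> (0 < r)%N -> #|F| = (2 ^ r)%N ->
  ((delta (2 ^ s).-1 (0 : F))%:R : rat)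
     = (((2 ^ r).-1 ^ (2 ^ s).-1).+1)%:R / (2 ^ r)%:R /\
  (forall beta : F, beta != 0 ->
     ((delta (2 ^ s).-1 beta)%:R : rat)
       = (kloosterman (2 ^ s - 2) beta^-1)%:~R
         + (((2 ^ r).-1 ^ (2 ^ s).-1).+1)%:R / (2 ^ r)%:R).
Proof.
move=> s_gt0 r_gt0 cardF.
have two_le : (2 <= 2 ^ s)%N by rewrite -{1}(expn1 2) leq_exp2l.
set m := (2 ^ s - 2)%N; have def_k : m.+2 = (2 ^ s)%N by rewrite /m; lia.
have q_gt0 : (0 < #|F|)%N by rewrite cardF expn_gt0.
have count b := scaled_count_rat q_gt0 (delta_fiber_sum r_gt0 cardF b s_gt0 def_k).
rewrite -def_k /= -cardF; split.
  by rewrite count fiber_sum0 mulr0z add0r.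
by move=> b b_neq0; rewrite count fiber_sum_kloosterman.
Qed.
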